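(* Let $\alpha\in(0,1)$. There is a constant $C$ depending only on $\alpha$ such that for all $f_1,f_2\in\mathcal V_1$, $$|c(f_1)-c(f_2)|\le C\,\|\rho(f_1-f_2)\|_{L^\infty}^{1-\alpha}.$$
   Context: Fix $\alpha\in(0,1)$ and set $c_{1,\alpha}=\frac{2^{2\alpha-1}\Gamma(\frac12+\alpha)}{\sqrt{\pi}\,\Gamma(1-\alpha)}$. Let $\rho(x)=(1+|x|)^{-\alpha}$ and $\mathcal V_0=\{f\in C(\mathbb{R}): f\text{ even},\ \|\rho f\|_{L^\infty}<\infty\}$. Let $\eta=2\left(\frac{3}{2(3-2\alpha)(5-2\alpha)(1+4^{\alpha})}\right)^{1/\min(\alpha,1-\alpha)}$. $\mathcal V_1$ is the set of $f\in\mathcal V_0$ such that $f(0)=1$; $f\ge0$ and $f$ is non-increasing on $[0,\infty)$; $x\mapsto f(\sqrt x)$ is convex on $[0,\infty)$; $f(x)\ge\max(0,1-x^2)$ for all $x$; and $f'_-(1/2)\le-\eta$. For $f\in\mathcal V_1$, $c(f)=\frac{2\alpha(1+2\alpha)}{3}c_{1,\alpha}\int_0^\infty\frac{1-f(\xi)}{\xi^{1+2\alpha}}\,d\xi$. *)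

From HB Require Import structures.
From mathcomp Require Import all_boot all_order all_algebra.
From mathcomp Require Import all_classical all_reals all_analysis.
Set Implicit Arguments. Unset Strict Implicit. Unset Printing Implicit Defensive.
Import Order.TTheory GRing.Theory Num.Theory numFieldNormedType.Exports.
Local Open Scope classical_set_scope.
Local Open Scope ring_scope.

Definition Gammaf (R : realType) (s : R) : R :=
  fine (\int[@lebesgue_measure R]_(t in `]0, +oo[%classic)
          ((t `^ (s - 1)) * expR (- t))%:E).

Definition c1 (R : realType) (a : R) : R :=
  2 `^ (2 * a - 1) * Gammaf (2^-1 + a) / (Num.sqrt pi * Gammaf (1 - a)).

Definition rho (R : realType) (a : R) (x : R) : R := (1 + `|x|) `^ (- a).

Definition wLinf (R : realType) (a : R) (g : R -> R) : R :=
  sup [set `|rho a x * g x| | x in [set: R]].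

Definition V0 (R : realType) (a : R) (f : R -> R) : Prop :=
  continuous f /\ (forall x, f (- x) = f x) /\
  (exists M : R, forall x, `|rho a x * f x| <= M).

Definition eta (R : realType) (a : R) : R :=
  2 * (3 / (2 * (3 - 2 * a) * (5 - 2 * a) * (1 + 4 `^ a)))
        `^ (1 / Order.min a (1 - a)).

Definition V1 (R : realType) (a : R) (f : R -> R) : Prop :=
  V0 a f /\
  f 0 = 1 /\
  (forall x, 0 <= f x) /\
  (forall x y, 0 <= x -> x <= y -> f y <= f x) /\
  (forall x y t, 0 <= x -> 0 <= y -> 0 <= t -> t <= 1 ->
     f (Num.sqrt ((1 - t) * x + t * y))
       <= (1 - t) * f (Num.sqrt x) + t * f (Num.sqrt y)) /\
  (forall x, Num.max 0 (1 - x ^+ 2) <= f x) /\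
  (exists L : R,
     ((fun h => (f (2^-1 + h) - f (2^-1)) / h) @ 0^'- --> L) /\ L <= - eta a).

Definition cf (R : realType) (a : R) (f : R -> R) : R :=
  2 * a * (1 + 2 * a) / 3 * c1 a *
  fine (\int[@lebesgue_measure R]_(xi in `]0, +oo[%classic)
          ((1 - f xi) / xi `^ (1 + 2 * a))%:E).

(* Both values [c f] are the same multiple of [I f = int_0^oo (1 - f x) / x^(1+2a) dx], so it
   suffices to bound [int_0^oo |f1 - f2| / x^(1+2a)].  Put [d = || rho (f1 - f2) ||]: since
   [1 - x^2 <= f <= 1], the numerator is at most [x^2], and by definition of [d] it is at most
   [d (1 + x)^a].  Splitting the integral at [e = sqrt d], the first bound gives
   [e^(2-2a) / (2-2a) = d^(1-a) / (2-2a)] on [(0, e]], and the second, with [1 + x <= 2x / e]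
   on [(e, oo)], gives [2^a d e^(-2a) / a = 2^a d^(1-a) / a]. *)

From HB Require Import structures.
From mathcomp Require Import all_boot all_order all_algebra.
From mathcomp Require Import all_classical all_reals all_analysis.
From mathcomp Require Import measurable_realfun lra zify.
Import Order.TTheory GRing.Theory Num.Theory numFieldNormedType.Exports.
Local Open Scope classical_set_scope.
Local Open Scope ring_scope.

Section PowerIntegrals.
Context {R : realType}.

Lemma powR_continuous (q x : R) : 0 < x -> {for x, continuous (@powR R ^~ q)}.
Proof.
move=> x_gt0; apply: differentiable_continuous; apply/derivable1_diffP.
by apply: derivable_powR; rewrite in_itv /= andbT.
Qed.

Lemma integral_powR_itv (q l u : R) : 0 < l -> l < u -> q + 1 != 0 ->
  (\int[lebesgue_measure]_(x in `[l, u]) (x `^ q)%:E =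
    (u `^ (q + 1) / (q + 1) - l `^ (q + 1) / (q + 1))%:E)%E.
Proof.
move=> l_gt0 lu q1_neq0.
have F_cont y : 0 < y -> {for y, continuous (fun x : R => x `^ (q + 1) / (q + 1))}.
  by move=> y_gt0; apply: continuousM; [exact: powR_continuous|exact: cst_continuous].
rewrite EFinB.
apply: (@continuous_FTC2 _ _ (fun x => x `^ (q + 1) / (q + 1))) => //.
- apply: continuous_in_subspaceT => x; rewrite inE /= in_itv /= => /andP[lx _].
  exact: powR_continuous (lt_le_trans l_gt0 lx).
- split.
  + move=> x; rewrite in_itv /= => /andP[lx _]; apply: derivableM => //.
    by apply: derivable_powR; rewrite in_itv /= andbT (lt_trans l_gt0 lx).
  + exact/cvg_at_right_filter/F_cont.
  + exact/cvg_at_left_filter/F_cont/(lt_trans l_gt0).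
- move=> x; rewrite in_itv /= => /andP[lx _].
  have x_gt0 : 0 < x by apply: lt_trans lx.
  rewrite derive1E deriveMr; last by apply: derivable_powR; rewrite in_itv /= andbT.
  rewrite -derive1E powR_derive1 ?in_itv /= ?andbT //.
  by rewrite addrK mulrA mulVf // mul1r.
Qed.

Local Open Scope ereal_scope.

Lemma ge0_integral_bigcup_le d (T : measurableType d) (mu : measure T R)
    (S : (set T)^nat) (f : T -> \bar R) (B : \bar R) :
  nondecreasing_seq S -> (forall n, measurable (S n)) ->
  (forall n, measurable_fun (S n) f) -> (forall n x, S n x -> 0 <= f x) ->
  (forall n, \int[mu]_(x in S n) f x <= B) ->
  \int[mu]_(x in \bigcup_n S n) f x <= B.
Proof.
move=> S_nd mS mf f_ge0 le_B.
have S_cvg := ge0_nondecreasing_set_cvg_integral (mu := mu) S_nd mS mf f_ge0.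
rewrite -(cvg_lim _ S_cvg) //; apply: lime_le; last exact: nearW.
by apply/cvg_ex; exists (\int[mu]_(x in \bigcup_n S n) f x).
Qed.

Lemma integral_powR_oc0_le (q e : R) : (0 < q + 1)%R -> (0 < e)%R ->
  \int[lebesgue_measure]_(x in `]0%R, e]) (x `^ q)%:E <= (e `^ (q + 1) / (q + 1))%:E.
Proof.
move=> q1_gt0 e_gt0.
have -> : `]0%R, e]%classic = \bigcup_n `[(e / n.+2%:R)%R, e]%classic.
  apply/seteqP; split => x /=.
    rewrite in_itv /= => /andP[x_gt0 xe].
    exists (Num.truncn (e / x)) => //=; rewrite in_itv /= xe andbT.
    have := truncnS_gt (e / x); rewrite ltr_pdivrMr // => ex.
    rewrite ler_pdivrMr ?ltr0Sn //; apply/ltW/(lt_le_trans ex).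
    by rewrite mulrC ler_pM2l // ler_nat; exact: leqW (ltnSn _).
  move=> [n _]; rewrite /= !in_itv /= => /andP[le_x ->]; rewrite andbT.
  by apply: lt_le_trans le_x; rewrite divr_gt0.
apply: ge0_integral_bigcup_le.
- move=> n m nm; rewrite subsetEset => x; rewrite /= !in_itv /= => /andP[le_x ->].
  rewrite andbT; apply: le_trans le_x.
  rewrite ler_pdivrMr ?ltr0Sn // mulrAC ler_pdivlMr ?ltr0Sn // ler_pM2l // ler_nat; lia.
- by move=> n; exact: measurable_itv.
- by move=> n; apply/measurable_EFinP/measurable_funTS; exact: measurable_powR.
- by move=> n x _; rewrite lee_fin powR_ge0.
- move=> n.
  have l_gt0 : (0 < e / n.+2%:R)%R by rewrite divr_gt0.
  have l_lt : (e / n.+2%:R < e)%R by rewrite ltr_pdivrMr ?ltr0Sn // ltr_pMr // ltr1n.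
  rewrite integral_powR_itv // ?gt_eqF // lee_fin.
  have : (0 <= (e / n.+2%:R) `^ (q + 1) / (q + 1))%R by rewrite divr_ge0 ?powR_ge0 // ltW.
  lra.
Qed.

Lemma integral_powR_ge_le (q e : R) : (q + 1 < 0)%R -> (0 < e)%R ->
  \int[lebesgue_measure]_(x in `[e, +oo[) (x `^ q)%:E <= (e `^ (q + 1) / - (q + 1))%:E.
Proof.
move=> q1_lt0 e_gt0.
have -> : `[e, +oo[%classic = \bigcup_n `[e, (e + n.+1%:R)%R]%classic.
  apply/seteqP; split => x /=.
    rewrite in_itv /= andbT => ex.
    exists (Num.truncn (x - e)) => //=; rewrite in_itv /= ex /=.
    have := truncnS_gt (x - e); lra.
  by move=> [n _]; rewrite /= !in_itv /= andbT => /andP[].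
apply: ge0_integral_bigcup_le.
- move=> n m nm; rewrite subsetEset => x; rewrite /= !in_itv /= => /andP[-> le_x] /=.
  by apply: (le_trans le_x); rewrite lerD2l ler_nat; lia.
- by move=> n; exact: measurable_itv.
- by move=> n; apply/measurable_EFinP/measurable_funTS; exact: measurable_powR.
- by move=> n x _; rewrite lee_fin powR_ge0.
- move=> n.
  rewrite integral_powR_itv ?ltrDl // ?lt_eqF // lee_fin invrN mulrN.
  have : ((e + n.+1%:R) `^ (q + 1) / (q + 1) <= 0)%R.
    by rewrite mulr_ge0_le0 // ?powR_ge0 // invr_le0 ltW.
  lra.
Qed.

End PowerIntegrals.

Section WeightedIntegrals.
Context {R : realType}.
Implicit Types (h : R -> R) (q e : R).

Lemma measurable_div_powR h q (D : set R) : continuous h -> measurable D ->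
  D `<=` `]0, +oo[ -> measurable_fun D (fun x => (h x / x `^ q)%:E).
Proof.
move=> h_cont mD D_pos; apply/measurable_EFinP.
apply: (measurable_funS _ D_pos) => //.
apply: open_continuous_measurable_fun; first exact: interval_open.
move=> x; rewrite inE /= in_itv /= andbT => x_gt0.
apply: cvgM; first exact: h_cont.
by apply: cvgV; [rewrite gt_eqF // powR_gt0 | exact: powR_continuous].
Qed.

Local Open Scope ereal_scope.

Lemma integral_div_powR_head_le {h q e} : (q < 3)%R -> (0 < e)%R -> continuous h ->
  (forall x, (0 < x)%R -> (x <= e)%R -> (0 <= h x <= x ^+ 2)%R) ->
  \int[lebesgue_measure]_(x in `]0%R, e]) (h x / x `^ q)%:E
    <= (e `^ (3 - q) / (3 - q))%:E.
Proof.
move=> q_lt3 e_gt0 h_cont h_sq.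
have sub_pos : `]0%R, e] `<=` `]0%R, +oo[.
  by move=> x; rewrite /= !in_itv /= andbT => /andP[].
have := @integral_powR_oc0_le R (2 - q) e.
rewrite (_ : 2 - q + 1 = 3 - q)%R; last by lra.
move=> le_primitive; apply: (le_trans _ (le_primitive _ e_gt0)); last by lra.
apply: ge0_le_integral => //.
- move=> x; rewrite /= in_itv /= => /andP[x_gt0 xe].
  by rewrite lee_fin divr_ge0 ?powR_ge0 //; case/andP: (h_sq x x_gt0 xe).
- exact: measurable_div_powR.
- by apply/measurable_EFinP/measurable_funTS; exact: measurable_powR.
move=> x; rewrite /= in_itv /= => /andP[x_gt0 xe]; rewrite lee_fin.
apply: (@le_trans _ _ (x ^+ 2 / x `^ q)%R).
  by rewrite ler_pM2r ?invr_gt0 ?powR_gt0 //; case/andP: (h_sq x x_gt0 xe).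
rewrite -powR_mulrn ?(ltW x_gt0) // -powRB //.
by apply/implyP => _; rewrite gt_eqF.
Qed.

Lemma integral_div_powR_tail_le {h} {p q K e : R} :
    (p + 1 < q)%R -> (0 < e)%R -> (0 <= K)%R -> continuous h ->
  (forall x, (e < x)%R -> (0 <= h x <= K * x `^ p)%R) ->
  \int[lebesgue_measure]_(x in `]e, +oo[) (h x / x `^ q)%:E
    <= (K * (e `^ (p - q + 1) / - (p - q + 1)))%:E.
Proof.
move=> pq e_gt0 K_ge0 h_cont h_le.
have sub_pos : `]e, +oo[ `<=` `]0%R, +oo[.
  by move=> x; rewrite /= !in_itv /= !andbT; apply: lt_trans.
have mK (D : set R) : measurable D -> measurable_fun D (fun x => (K * x `^ (p - q))%:E).
  move=> mD; apply/measurable_EFinP/measurable_funM => //.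
  by apply: measurable_funTS; exact: measurable_powR.
apply: (@le_trans _ _ (\int[lebesgue_measure]_(x in `[e, +oo[) (K * x `^ (p - q))%:E)).
  apply: (@le_trans _ _ (\int[lebesgue_measure]_(x in `]e, +oo[) (K * x `^ (p - q))%:E)).
    apply: ge0_le_integral => //.
    - move=> x; rewrite /= in_itv /= andbT => ex.
      by rewrite lee_fin divr_ge0 ?powR_ge0 //; case/andP: (h_le x ex).
    - exact: measurable_div_powR.
    - by apply: mK; exact: measurable_itv.
    move=> x; rewrite /= in_itv /= andbT => ex; rewrite lee_fin.
    have x_gt0 : (0 < x)%R by apply: lt_trans ex.
    rewrite powRB; last by apply/implyP => _; rewrite gt_eqF.
    by rewrite mulrA ler_pM2r ?invr_gt0 ?powR_gt0 //; case/andP: (h_le x ex).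
  apply: ge0_subset_integral => //.
  - by apply: mK; exact: measurable_itv.
  - by move=> x _; rewrite lee_fin mulr_ge0 ?powR_ge0.
  - by move=> x; rewrite /= !in_itv /= !andbT => /ltW.
under eq_integral do rewrite EFinM.
rewrite ge0_integralZl_EFin //; last 2 first.
- by move=> x _; rewrite lee_fin powR_ge0.
- by apply/measurable_EFinP/measurable_funTS; exact: measurable_powR.
rewrite EFinM; apply: lee_wpmul2l; first by rewrite lee_fin.
by apply: integral_powR_ge_le => //; lra.
Qed.

End WeightedIntegrals.

Section Interpolation.
Context {R : realType}.

Definition holder_const (a : R) : R := (2 - 2 * a)^-1 + 2 `^ a / a.

Lemma holder_const_ge0 (a : R) : 0 < a -> a < 1 -> 0 <= holder_const a.
Proof.
move=> a_gt0 a_lt1; apply: addr_ge0; first by rewrite invr_ge0; lra.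
by rewrite divr_ge0 ?powR_ge0 ?ltW.
Qed.

Lemma integral_interpolation_le {a d : R} {h : R -> R} :
    0 < a -> a < 1 -> 0 < d -> d <= 1 -> continuous h ->
    (forall x, 0 < x -> 0 <= h x <= x ^+ 2) ->
    (forall x, 0 < x -> h x <= d * (1 + x) `^ a) ->
  (\int[lebesgue_measure]_(x in `]0%R, +oo[) (h x / x `^ (1 + 2 * a))%:E
    <= (holder_const a * d `^ (1 - a))%:E)%E.
Proof.
move=> a_gt0 a_lt1 d_gt0 d_le1 h_cont h_sq h_d.
set e := Num.sqrt d.
have e_gt0 : 0 < e by rewrite sqrtr_gt0.
have e_le1 : e <= 1 by rewrite -sqrtr1 ler_sqrt.
have ee : e * e = d by rewrite -expr2 sqr_sqrtr // ltW.
set K := d * 2 `^ a / e `^ a.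
have K_ge0 : 0 <= K by rewrite !mulr_ge0 ?powR_ge0 ?invr_ge0 ?powR_ge0 // ltW.
(* [d (1 + x)^a <= d (2 x / e)^a = K x^a], since [e (1 + x) <= 2 x] for [x > e >= e^2] *)
have h_tail x : e < x -> 0 <= h x <= K * x `^ a.
  move=> ex; have x_gt0 : 0 < x by apply: lt_trans ex.
  have /andP[-> _] := h_sq x x_gt0; apply: le_trans (h_d x x_gt0) _.
  rewrite /K -!mulrA ler_pM2l // mulrCA ler_pdivlMl ?powR_gt0 // mulrC.
  rewrite -!powRM ?(ltW x_gt0) ?(ltW e_gt0) //; last by lra.
  apply: ge0_ler_powR; rewrite ?nnegrE; [lra| apply: mulr_ge0; lra | lra |].
  have : 0 <= (1 - e) * x by rewrite mulr_ge0 //; lra.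
  nra.
have split_itv : `]0, +oo[%classic = `]0, e] `|` `]e, +oo[.
  by rewrite (@itv_bndbnd_setU _ _ _ (BRight e)) // bnd_simp ltW.
have h_ge0 x : `]0, +oo[%classic x -> (0 <= (h x / x `^ (1 + 2 * a))%:E)%E.
  rewrite /= in_itv /= andbT => x_gt0; rewrite lee_fin divr_ge0 ?powR_ge0 //.
  by case/andP: (h_sq x x_gt0).
rewrite split_itv ge0_integral_setU //; last 3 first.
- by apply: measurable_div_powR => //; rewrite -split_itv.
- by rewrite -split_itv.
- rewrite disj_set2E; apply/eqP/seteqP; split => x //=.
  rewrite !in_itv /= andbT => -[/andP[_ xe] ex].
  by move: (lt_le_trans ex xe); rewrite ltxx.
have q_lt3 : 1 + 2 * a < 3 by lra.
have pq : a + 1 < 1 + 2 * a by lra.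
have h_head x : 0 < x -> x <= e -> 0 <= h x <= x ^+ 2 by move=> x_gt0 _; exact: h_sq.
apply: le_trans (leeD (integral_div_powR_head_le q_lt3 e_gt0 h_cont h_head)
  (integral_div_powR_tail_le pq e_gt0 K_ge0 h_cont h_tail)) _.
rewrite -EFinD lee_fin.
have -> : 3 - (1 + 2 * a) = 2 - 2 * a by lra.
have -> : a - (1 + 2 * a) + 1 = - a by lra.
have pow_d : e `^ (2 - 2 * a) = d `^ (1 - a).
  rewrite (_ : 2 - 2 * a = (1 - a) + (1 - a)); last by lra.
  rewrite powRD; last by apply/implyP => _; rewrite gt_eqF.
  by rewrite -powRM ?ltW // ee.
have K_pow : K * e `^ (- a) = 2 `^ a * d `^ (1 - a).
  rewrite /K powRN -mulrA -invfM -powRM ?ltW // ee.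
  rewrite powRB; last by apply/implyP => _; rewrite gt_eqF.
  by rewrite powRr1 ?ltW // mulrCA mulrA.
rewrite opprK pow_d mulrA K_pow /holder_const mulrDl.
lra.
Qed.

End Interpolation.

Section ProfileIntegral.
Context {R : realType}.
Variable a : R.
Implicit Types f : R -> R.
Hypotheses (a_gt0 : 0 < a) (a_lt1 : a < 1).

Definition cf_integral (f : R -> R) : \bar R :=
  \int[@lebesgue_measure R]_(xi in `]0, +oo[%classic)
    ((1 - f xi) / xi `^ (1 + 2 * a))%:E.

Lemma V1_bounds f : V1 a f ->
  [/\ continuous f, forall x, 0 <= f x, forall x, f x <= 1
    & forall x, 1 - x ^+ 2 <= f x].
Proof.
move=> [[f_cont [f_even _]] [f0 [f_ge0 [f_nincr [_ [f_lb _]]]]]].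
split=> // [x|x]; last by apply: le_trans (f_lb x); rewrite le_max lexx orbT.
have [x_ge0|x_lt0] := leP 0 x; first by rewrite -f0; apply: f_nincr.
by rewrite -f_even -f0; apply: f_nincr; lra.
Qed.

Lemma continuous_one_sub f : continuous f -> continuous (fun x => 1 - f x).
Proof. by move=> f_cont x; apply: cvgB; [exact: cvg_cst | exact: f_cont]. Qed.

Lemma cf_integral_fin_num {f} : V1 a f -> cf_integral f \is a fin_num.
Proof.
move=> /V1_bounds[f_cont f_ge0 f_le1 f_lb].
rewrite ge0_fin_numE; last first.
  apply: integral_ge0 => x; rewrite /= in_itv /= andbT => x_gt0.
  by rewrite lee_fin divr_ge0 ?powR_ge0 // subr_ge0.
apply: le_lt_trans (ltry (holder_const a * 1 `^ (1 - a))).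
apply: integral_interpolation_le => //; first exact: continuous_one_sub.
- by move=> x x_gt0; rewrite subr_ge0 f_le1 /=; have := f_lb x; lra.
- move=> x x_gt0; rewrite mul1r; apply: (@le_trans _ _ (1 `^ a)).
    by rewrite powR1; have := f_ge0 x; lra.
  by apply: ge0_ler_powR; rewrite ?nnegrE ?(ltW a_gt0) //; lra.
Qed.

Section Difference.
Context {d : R} {f1 f2 : R -> R}.
Hypotheses (f1_V1 : V1 a f1) (f2_V1 : V1 a f2) (d_gt0 : 0 < d) (d_le1 : d <= 1).
Hypothesis f12_le : forall x, 0 < x -> `|f1 x - f2 x| <= d * (1 + x) `^ a.

Let f12_cont : continuous (fun x => `|f1 x - f2 x|).
Proof.
have /V1_bounds[f1_cont _ _ _] := f1_V1; have /V1_bounds[f2_cont _ _ _] := f2_V1.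
by move=> x; apply: cvg_norm; apply: cvgB; [exact: f1_cont | exact: f2_cont].
Qed.

Lemma cf_integral_le :
  (cf_integral f1 <= cf_integral f2 + (holder_const a * d `^ (1 - a))%:E)%E.
Proof.
have /V1_bounds[f1_cont f1_ge0 f1_le1 f1_lb] := f1_V1.
have /V1_bounds[f2_cont f2_ge0 f2_le1 f2_lb] := f2_V1.
have one_sub_div_ge0 g : (forall x, g x <= 1) -> forall x, `]0%R, +oo[%classic x ->
    (0 <= ((1 - g x) / x `^ (1 + 2 * a))%:E)%E.
  move=> g_le1 x; rewrite /= in_itv /= andbT => x_gt0.
  by rewrite lee_fin divr_ge0 ?powR_ge0 // subr_ge0.
have f12_sq x : 0 < x -> 0 <= `|f1 x - f2 x| <= x ^+ 2.
  move=> _; rewrite normr_ge0 /= ler_norml.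
  by have := f1_lb x; have := f2_lb x; have := f1_le1 x; have := f2_le1 x; lra.
apply: le_trans (leeD2l _
  (integral_interpolation_le a_gt0 a_lt1 d_gt0 d_le1 f12_cont f12_sq f12_le)).
rewrite /cf_integral -ge0_integralD //; last 4 first.
- exact: one_sub_div_ge0 f2_le1.
- by apply: measurable_div_powR => //; exact: continuous_one_sub.
- by move=> x; rewrite /= in_itv /= andbT => x_gt0; rewrite lee_fin divr_ge0 ?powR_ge0.
- exact: measurable_div_powR.
apply: ge0_le_integral => //.
- exact: one_sub_div_ge0 f1_le1.
- by apply: measurable_div_powR => //; exact: continuous_one_sub.
- apply/measurable_EFinP; apply: measurable_funD; apply/measurable_EFinP.
    by apply: measurable_div_powR => //; exact: continuous_one_sub.
  exact: measurable_div_powR.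
move=> x; rewrite /= in_itv /= andbT => x_gt0.
rewrite -EFinD lee_fin -mulrDl ler_pM2r ?invr_gt0 ?powR_gt0 //.
by have := ler_norm (f2 x - f1 x); rewrite distrC; lra.
Qed.

End Difference.

Lemma cf_integral_dist_le {d f1 f2} : V1 a f1 -> V1 a f2 -> 0 < d -> d <= 1 ->
  (forall x, 0 < x -> `|f1 x - f2 x| <= d * (1 + x) `^ a) ->
  `|fine (cf_integral f1) - fine (cf_integral f2)| <= holder_const a * d `^ (1 - a).
Proof.
move=> f1_V1 f2_V1 d_gt0 d_le1 f12_le.
have f21_le x : 0 < x -> `|f2 x - f1 x| <= d * (1 + x) `^ a.
  by rewrite distrC; exact: f12_le.
have := cf_integral_le f1_V1 f2_V1 d_gt0 d_le1 f12_le.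
have := cf_integral_le f2_V1 f1_V1 d_gt0 d_le1 f21_le.
rewrite -(fineK (cf_integral_fin_num f1_V1)) -(fineK (cf_integral_fin_num f2_V1)).
by rewrite -!EFinD !lee_fin ler_norml; lra.
Qed.

End ProfileIntegral.

Lemma rho_gt0 {R : realType} (a x : R) : 0 < rho a x.
Proof. by rewrite /rho powR_gt0 // ltr_pwDl. Qed.

Section WeightedSup.
Context {R : realType} {a : R} {g : R -> R}.
Hypotheses (a_ge0 : 0 <= a) (g_le1 : forall x, `|g x| <= 1).

Let weighted_le1 x : `|rho a x * g x| <= 1.
Proof.
have rho_le1 : rho a x <= 1.
  rewrite /rho powRN invf_le1 ?powR_gt0 ?ltr_pwDl //.
  apply: (@le_trans _ _ (1 `^ a)); first by rewrite powR1.
  by apply: ge0_ler_powR; rewrite // ?nnegrE ?lerDl ?addr_ge0.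
have rho_ge0 := ltW (rho_gt0 a x).
rewrite normrM ger0_norm // -[leRHS]mulr1.
by apply: ler_pM => //; exact: g_le1.
Qed.

Let weighted_ub : has_ubound [set `|rho a x * g x| | x in [set: R]].
Proof. by exists 1 => _ [x _ <-]; exact: weighted_le1. Qed.

Lemma wLinf_le1 : wLinf a g <= 1.
Proof.
apply: ge_sup; first by exists `|rho a 0 * g 0|, 0.
by move=> _ [x _ <-]; exact: weighted_le1.
Qed.

Lemma weighted_le_wLinf x : `|rho a x * g x| <= wLinf a g.
Proof. by apply: (ub_le_sup weighted_ub); exists x. Qed.

Lemma wLinf_ge0 : 0 <= wLinf a g.
Proof. exact: le_trans (normr_ge0 _) (weighted_le_wLinf 0). Qed.

Lemma norm_le_wLinf x : `|g x| <= wLinf a g * (1 + `|x|) `^ a.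
Proof.
have := weighted_le_wLinf x.
rewrite normrM (ger0_norm (ltW (rho_gt0 a x))) /rho powRN.
by rewrite ler_pdivrMl ?powR_gt0 ?ltr_pwDl // mulrC.
Qed.

End WeightedSup.

Theorem mainTheorem5 (R : realType) (a : R) (ha0 : 0 < a) (ha1 : a < 1) :
  exists C : R, forall f1 f2 : R -> R, V1 a f1 -> V1 a f2 ->
    `|cf a f1 - cf a f2| <= C * (wLinf a (f1 \- f2)) `^ (1 - a).
Proof.
pose K := 2 * a * (1 + 2 * a) / 3 * c1 a.
exists (`|K| * holder_const a) => f1 f2 f1_V1 f2_V1.
have /V1_bounds[_ f1_ge0 f1_le1 _] := f1_V1.
have /V1_bounds[_ f2_ge0 f2_le1 _] := f2_V1.
have f12_le1 x : `|(f1 \- f2) x| <= 1.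
  rewrite ler_norml /=.
  by have := f1_ge0 x; have := f2_ge0 x; have := f1_le1 x; have := f2_le1 x; lra.
have a_ge0 := ltW ha0; set w := wLinf a (f1 \- f2).
have [w_eq0|w_neq0] := eqVneq w 0.
  (* the splitting point [sqrt w] must be positive; [w = 0] forces [f1 = f2] *)
  suff f12 : f1 = f2.
    by rewrite f12 subrr normr0 !mulr_ge0 ?powR_ge0 // holder_const_ge0.
  apply/funext => x; apply/eqP; rewrite -subr_eq0 -normr_le0.
  by have := norm_le_wLinf a_ge0 f12_le1 x; rewrite -/w w_eq0 mul0r.
rewrite /cf -/K -mulrBr normrM -mulrA ler_wpM2l //.
apply: cf_integral_dist_le => //.
- by rewrite lt_def w_neq0 (wLinf_ge0 a_ge0 f12_le1).
- exact: (wLinf_le1 a_ge0 f12_le1).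
- move=> x x_gt0; rewrite -[x in (1 + x) `^ a](gtr0_norm x_gt0).
  exact: (norm_le_wLinf a_ge0 f12_le1 x).
Qed.
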